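(* Let $\alpha,\beta$ be nonzero algebraic integers with $\alpha/\beta$ not a root of unity, and let $L_n=L_n(\alpha,\beta)=\frac{\alpha^n-\beta^n}{\alpha-\beta}$. Suppose that for some integer $m\ge2$, $L_n^m\in\mathbb Z$ for all $n\ge0$. Then there exists an algebraic integer $\gamma$ with $\gamma^m\in\mathbb Q$ and $\alpha=\gamma\alpha'$, $\beta=\gamma\beta'$, such that either $L_n(\alpha',\beta')\in\mathbb Q$ for all $n$, or $m$ is even and there are coprime integers $r,s$ with $\alpha'=\sqrt r+\sqrt s$, $\beta'=\sqrt r-\sqrt s$, so that $L_n(\alpha',\beta')^2\in\mathbb Q$ for all $n$.
   Context: $L_n(x,y)=(x^n-y^n)/(x-y)$. *)

From HB Require Import structures.
From mathcomp Require Import all_boot all_order all_algebra all_field.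
Set Implicit Arguments. Unset Strict Implicit. Unset Printing Implicit Defensive.
Import Order.TTheory GRing.Theory Num.Theory.
Local Open Scope ring_scope.

Definition lucasL (n : nat) (x y : algC) : algC := (x ^+ n - y ^+ n) / (x - y).

From HB Require Import structures.
From mathcomp Require Import all_boot all_order all_algebra all_field.
From mathcomp Require Import ring zify.
Set Implicit Arguments. Unset Strict Implicit. Unset Printing Implicit Defensive.
Import Order.TTheory GRing.Theory Num.Theory.
Local Open Scope ring_scope.

(* Take gamma = alpha + beta, so gamma^m = L_2^m is rational: the normalised pair
   (alpha', beta') has sum 1, hence L_n(alpha', beta') = P_n(x) for a polynomial P_n
   with rational coefficients in the product x = alpha' beta', and it suffices to show
   that x is rational (so the first alternative always holds).  A conjugate y of x is
   the product of another pair of sum 1 whose Lucas numbers have the same m-th powers,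
   because the L_n^m are rational values of rational polynomials at x.  Expanding
   L_n^m as an exponential sum in n and comparing the frequencies that occur forces the
   ratios of the two pairs to be equal or inverse, whence y = x.  Finally a number that
   equals each of its irrational conjugates is rational, since the sum of all its
   conjugates is. *)

Definition not_root_of_unity (r : algC) := forall k, (0 < k)%N -> r ^+ k != 1.

Lemma expf_inj_not_root_of_unity (r : algC) :
  r != 0 -> not_root_of_unity r -> injective (GRing.exp r).
Proof.
move=> r0 r_nunity a b; wlog ab : a b / (a <= b)%N.
  by move=> W; case/orP: (leq_total a b) => [/W //|/W W' /esym /W'].
rewrite -(subnKC ab) exprD -{1}[r ^+ a]mulr1 => /(mulfI (expf_neq0 a r0)) /esym/eqP.
have [->|ba] := posnP (b - a); first by rewrite addn0.
by rewrite (negbTE (r_nunity _ ba)).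
Qed.

Lemma expsum_eq0_fibre (I : finType) (c l : I -> algC) :
  (forall n, \sum_i c i * l i ^+ n = 0) -> forall v, \sum_(i | l i == v) c i = 0.
Proof.
move=> c_sum0 v; have [k] := ubnP #|[set i | (c i != 0) && (l i != v)]|.
elim: k c c_sum0 => // k IH c c_sum0; rewrite ltnS.
have [/set0Pn[i0] | S0 _] := boolP ([set i | (c i != 0) && (l i != v)] != set0).
  rewrite inE => /andP[ci0 li0] le_k.
  (* Multiplying by (X - l i0) kills the frequency l i0 and rescales every fibre. *)
  pose c' i := c i * (l i - l i0).
  have c'_sum0 n : \sum_i c' i * l i ^+ n = 0.
    transitivity (\sum_i c i * l i ^+ n.+1 - l i0 * \sum_i c i * l i ^+ n).
      by rewrite mulr_sumr -sumrB; apply: eq_bigr => i _; rewrite /c' exprS; ring.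
    by rewrite !c_sum0 mulr0 subr0.
  have : \sum_(i | l i == v) c' i = 0.
    apply: (IH c' c'_sum0); apply: leq_trans le_k; apply: proper_card; apply/properP.
    split; last by exists i0; rewrite !inE ?ci0 // /c' subrr mulr0 eqxx.
    by apply/subsetP => i; rewrite !inE /c' mulf_eq0 negb_or => /andP[/andP[->]].
  rewrite (eq_bigr (fun i => c i * (v - l i0))) => [|i /eqP <- //].
  rewrite -mulr_suml => /eqP; rewrite mulf_eq0 subr_eq0 [v == _]eq_sym (negbTE li0).
  by rewrite orbF => /eqP.
transitivity (\sum_i c i * l i ^+ 0); last exact: c_sum0.
rewrite [RHS](bigID (fun i => l i == v)) /= [X in _ = _ + X]big1 ?addr0.
  by apply: eq_bigr => i _; rewrite expr0 mulr1.
move=> i liv; move: S0; rewrite negbK => /eqP/setP/(_ i).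
by rewrite !inE liv andbT => /negbFE/eqP ->; rewrite mul0r.
Qed.

Lemma expsum_eq_freq (I J : finType) (c l : I -> algC) (d k : J -> algC) :
  injective k -> (forall n, \sum_i c i * l i ^+ n = \sum_j d j * k j ^+ n) ->
  forall j, d j != 0 -> exists i, l i = k j.
Proof.
move=> k_inj sum_eq j dj0.
pose c' (s : I + J) := match s with inl i => c i | inr j => - d j end.
pose l' (s : I + J) := match s with inl i => l i | inr j => k j end.
have c'_sum0 n : \sum_s c' s * l' s ^+ n = 0.
  by rewrite big_sumType /= sum_eq -big_split big1 //= => j' _; rewrite mulNr subrr.
have := expsum_eq0_fibre c'_sum0 (k j); rewrite big_sumType /=.
rewrite (eq_bigl (pred1 j)) => [|j'/=]; last by apply/eqP/eqP => [/k_inj|->].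
rewrite big_pred1_eq.
case: (pickP (fun i => l i == k j)) => [i /eqP|no_i]; first by exists i.
by rewrite big_pred0 // add0r => /eqP; rewrite oppr_eq0 (negbTE dj0).
Qed.

Lemma lucasL_rec n (u w : algC) :
  lucasL n.+2 u w = (u + w) * lucasL n.+1 u w - u * w * lucasL n u w.
Proof. by rewrite /lucasL !exprS; ring. Qed.

Lemma lucasL2 u w : u != w -> lucasL 2 u w = u + w.
Proof.
move=> uw; rewrite /lucasL (_ : u ^+ 2 - w ^+ 2 = (u + w) * (u - w)) ?mulfK ?subr_eq0 //.
by ring.
Qed.

Lemma lucasL_eq0 n u w : u != w -> w != 0 -> (lucasL n u w == 0) = ((u / w) ^+ n == 1).
Proof.
move=> uw w0; rewrite /lucasL mulf_eq0 invr_eq0 !subr_eq0 (negbTE uw) orbF.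
rewrite expr_div_n; apply/eqP/eqP => [->|/(canRL (divfK (expf_neq0 n w0)))].
  by rewrite divff ?expf_neq0.
by rewrite mul1r.
Qed.

Lemma lucasL_divr n u w c :
  c != 0 -> u != w -> lucasL n (u / c) (w / c) = lucasL n u w * c / c ^+ n.
Proof.
by move=> c0 uw; rewrite /lucasL !expr_div_n; field; rewrite subr_eq0 uw expf_neq0.
Qed.

Fixpoint lucas_poly (n : nat) : {poly rat} :=
  if n is n'.+1 then
    if n' is n''.+1 then lucas_poly n' - 'X * lucas_poly n'' else 1
  else 0.

Lemma lucas_polyE n u w : u + w = 1 -> u != w ->
  (map_poly ratr (lucas_poly n)).[u * w] = lucasL n u w.
Proof.
move=> uw1 uw; elim/ltn_ind: n => -[|[|n]] IH.
- by rewrite rmorph0 horner0 /lucasL subrr mul0r.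
- by rewrite rmorph1 hornerC /lucasL !expr1 divff ?subr_eq0.
rewrite lucasL_rec uw1 mul1r -!IH // rmorphB rmorphM /= map_polyX.
by rewrite hornerD hornerN hornerM hornerX.
Qed.

Lemma lucasL_expn_expand n m u w : w != 0 ->
  lucasL n u w ^+ m = \sum_(i < m.+1)
    ((-1) ^+ (m - i) *+ 'C(m, i) / (u - w) ^+ m) * (w ^+ m * (u / w) ^+ i) ^+ n.
Proof.
move=> w0; rewrite /lucasL; have -> : u ^+ n - w ^+ n = w ^+ n * (-1 + (u / w) ^+ n).
  by rewrite mulrDr mulrN1 expr_div_n mulrC divfK ?expf_neq0 // addrC.
rewrite expr_div_n exprMn exprDn mulr_sumr mulr_suml; apply: eq_bigr => i _.
by rewrite !exprMn -!exprM (mulnC n m) (mulnC n i); ring.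
Qed.

Lemma Cint_Crat : {subset Num.int <= Crat}.
Proof. by move=> _ /intrP[z ->]; apply: rpred_int. Qed.

Lemma horner_rat_conjugate (p : {poly rat}) x y :
  (map_poly ratr p).[x] \in Crat -> root (minCpoly x) y ->
  (map_poly ratr p).[y] = (map_poly ratr p).[x].
Proof.
case/CratP=> a pxa y_conj; have [q [Dq _] min_q] := minCpolyP x.
have : root (map_poly ratr (p - a%:P)) x.
  by rewrite rmorphB /= map_polyC rootE hornerD hornerN hornerC pxa subrr.
rewrite min_q => /dvdpP[h Dh].
have : root (map_poly ratr (p - a%:P)) y by rewrite Dh rmorphM rootM /= -Dq y_conj orbT.
by rewrite pxa rmorphB /= map_polyC rootE hornerD hornerN hornerC subr_eq0 => /eqP.
Qed.

Lemma Crat_sum_roots_minCpoly x (r : seq algC) :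
  minCpoly x = \prod_(z <- r) ('X - z%:P) -> \sum_(z <- r) z \in Crat.
Proof.
move=> Dr; have r0 : size r != 0%N.
  by have := size_minCpoly x; rewrite Dr size_prod_XsubC; case: (size r).
rewrite -rpredN -coefPn_prod_XsubC // -Dr.
by have [p [-> _] _] := minCpolyP x; rewrite coef_map Crat_rat.
Qed.

Lemma Crat_of_conjugates x :
  (forall y, root (minCpoly x) y -> y \notin Crat -> y = x) -> x \in Crat.
Proof.
move=> conj_x; have [r] := closed_field_poly_normal (minCpoly x).
rewrite (monicP (minCpoly_monic x)) scale1r => Dr.
have := Crat_sum_roots_minCpoly Dr; rewrite (bigID (pred1 x)) /= rpredDr; last first.
  rewrite big_seq_cond; apply: rpred_sum => z /andP[zr zx]; apply: contraNT zx => zQ.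
  by rewrite (conj_x z _ zQ) // Dr root_prod_XsubC.
rewrite (eq_bigr (fun=> x)) => [|z /eqP //]; rewrite big_const_seq iter_addr_0.
have k0 : (0 < count (pred1 x) r)%N.
  by rewrite -has_count has_pred1 -root_prod_XsubC -Dr root_minCpoly.
rewrite -mulr_natr => /rpred_div/(_ (rpred_nat _ (count (pred1 x) r))).
by rewrite mulfK ?pnatr_eq0 -?lt0n.
Qed.

Lemma exists_sum1_pair y : exists u w : algC, u + w = 1 /\ u * w = y.
Proof.
have two0 : (2 : algC) != 0 by rewrite pnatr_eq0.
pose s := sqrtC (1 - 4 * y); exists ((1 + s) / 2), ((1 - s) / 2); split; first by field.
have -> : (1 + s) / 2 * ((1 - s) / 2) = (1 - s ^+ 2) / 4 by field.
by rewrite sqrtCK; field.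
Qed.

Lemma sum1_mul_eq (u w u' w' : algC) : u + w = 1 -> u' + w' = 1 -> w != 0 -> w' != 0 ->
  u' / w' = u / w \/ u' / w' * (u / w) = 1 -> u' * w' = u * w.
Proof.
move=> /(canRL (addrK w))-> /(canRL (addrK w'))-> w0 w'0 [/eqP|E].
  rewrite eqr_div // => /eqP E; suff -> : w' = w by [].
  have : (1 - w') * w - (1 - w) * w' = w - w' by ring.
  by rewrite E subrr => /esym/eqP; rewrite subr_eq0 => /eqP.
have E2 : (1 - w') * (1 - w) = w' * w.
  by rewrite -[w' * w]mul1r -[in RHS]E; field; rewrite w0 w'0.
have : (1 - w') * (1 - w) - w' * w = 1 - w - w' by ring.
by rewrite E2 subrr => /esym/eqP; rewrite subr_eq0 => /eqP <-; ring.
Qed.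

Lemma exponent_match (m a b c : nat) : (0 < m)%N -> (b <= m)%N -> (c <= m)%N ->
  a != b -> (b * m + c = b + a * m)%N -> (b = 0 /\ a = 1)%N \/ a.+1 = b.
Proof.
move=> m0 bm cm; case: (ltngtP a b) => // [ab|ba] _ E; [right|left].
- have [k Dk] : exists k, b = (a + k.+1)%N by exists (b - a.+1)%N; lia.
  subst b; move: E; rewrite !mulnDl mulSn => E.
  have : (k * m = 0)%N by lia.
  by move/eqP; rewrite muln_eq0; lia.
- have [k Dk] : exists k, a = (b + k.+1)%N by exists (a - b.+1)%N; lia.
  subst a; move: E; rewrite !mulnDl mulSn => E.
  have : (k * m = 0)%N by lia.
  by move/eqP; rewrite muln_eq0; lia.
Qed.

Lemma geometric_match (r t B D : algC) (m a b c : nat) :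
  (0 < m)%N -> r != 0 -> not_root_of_unity r -> t != 1 -> B != 0 ->
  (b <= m)%N -> (c <= m)%N ->
  D = B * r ^+ b -> D * t = B * r ^+ a -> D * t ^+ m = B * r ^+ c ->
  t = r \/ t * r = 1.
Proof.
move=> m0 r0 r_nunity t1 B0 bm cm -> E1 Em.
have {}E1 : r ^+ b * t = r ^+ a by apply: (mulfI B0); rewrite mulrA.
have {}Em : r ^+ b * t ^+ m = r ^+ c by apply: (mulfI B0); rewrite mulrA.
have E : (b * m + c = b + a * m)%N.
  (* r^(b m) r^c = r^b (r^b t)^m = r^b r^(a m) *)
  apply: (expf_inj_not_root_of_unity r0 r_nunity).
  by rewrite /= exprD -Em mulrCA exprM -exprMn E1 -exprM -exprD.
have [ab|nab] := eqVneq a b.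
  by case/negP: t1; apply/eqP/(mulfI (expf_neq0 b r0)); rewrite E1 ab mulr1.
have [[b0 a1]|Eb] := exponent_match m0 bm cm nab E.
  by left; move: E1; rewrite b0 a1 mul1r expr1.
by right; apply: (mulfI (expf_neq0 a r0)); rewrite mulr1 -[RHS]E1 -Eb exprS; ring.
Qed.

Lemma lucasL_expn_eq_mul (ap bp gp dp : algC) (m : nat) : (0 < m)%N ->
  ap + bp = 1 -> gp + dp = 1 -> ap != 0 -> bp != 0 -> gp != 0 -> dp != 0 ->
  not_root_of_unity (ap / bp) -> not_root_of_unity (gp / dp) ->
  (forall n, lucasL n gp dp ^+ m = lucasL n ap bp ^+ m) -> gp * dp = ap * bp.
Proof.
move=> m0 s1 s2 ap0 bp0 gp0 dp0 r_nu t_nu L_eq.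
set r := ap / bp; set t := gp / dp.
have r0 : r != 0 by rewrite mulf_neq0 ?invr_eq0.
have t0 : t != 0 by rewrite mulf_neq0 ?invr_eq0.
have t1 : t != 1 by have := t_nu 1%N isT; rewrite expr1.
have gpdp : gp != dp by apply: contra_neq t1 => gd; rewrite /t gd divff.
have freq j : (j <= m)%N -> exists2 i, (i <= m)%N & dp ^+ m * t ^+ j = bp ^+ m * r ^+ i.
  move=> jm; pose J : 'I_m.+1 := Ordinal (jm : (j < m.+1)%N).
  pose c i := (-1) ^+ (m - i) *+ 'C(m, i) / (ap - bp) ^+ m.
  pose d j := (-1) ^+ (m - j) *+ 'C(m, j) / (gp - dp) ^+ m.
  have [||| i Ei] := @expsum_eq_freq 'I_m.+1 'I_m.+1 c
    (fun i => bp ^+ m * r ^+ i) d (fun j => dp ^+ m * t ^+ j) _ _ J.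
  - move=> j1 j2 /(mulfI (expf_neq0 m dp0)).
    by move/(expf_inj_not_root_of_unity t0 t_nu)/ord_inj.
  - by move=> n; rewrite -!lucasL_expn_expand.
  - rewrite /d mulf_neq0 ?invr_eq0 ?expf_neq0 ?subr_eq0 // mulrn_eq0 negb_or.
    by rewrite -lt0n bin_gt0 -ltnS ltn_ord expf_neq0 // oppr_eq0 oner_eq0.
  - by exists i; rewrite -?Ei // -ltnS.
have [b bm E0] := freq 0%N isT.
have [a _ E1] := freq 1%N m0.
have [c cm Em] := freq m (leqnn m).
rewrite expr0 mulr1 in E0; rewrite expr1 in E1.
have [tr|tr] := geometric_match m0 r0 r_nu t1 (expf_neq0 m bp0) bm cm E0 E1 Em.
  by apply: sum1_mul_eq; [..|left].
by apply: sum1_mul_eq; [..|right].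
Qed.

Lemma irrational_conjugate_sum1_mul (ap bp y : algC) (m : nat) : (0 < m)%N ->
  ap + bp = 1 -> ap != 0 -> bp != 0 -> not_root_of_unity (ap / bp) ->
  (forall n, lucasL n ap bp ^+ m \in Crat) ->
  root (minCpoly (ap * bp)) y -> y \notin Crat -> y = ap * bp.
Proof.
move=> m0 s1 ap0 bp0 r_nu Lrat y_conj yQ.
have apbp : ap != bp by apply: contra_neq (r_nu 1%N isT) => ->; rewrite expr1 divff.
have [gp [dp [s2 Dy]]] := exists_sum1_pair y.
have y0 : y != 0 by apply: contraNneq yQ => ->; apply: Crat0.
have gp0 : gp != 0 by apply: contraNneq y0 => gp0; rewrite -Dy gp0 mul0r.
have dp0 : dp != 0 by apply: contraNneq y0 => dp0; rewrite -Dy dp0 mulr0.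
have gpdp : gp != dp.
  apply: contraNneq yQ => gd; rewrite -Dy -gd.
  have two0 : (2 : algC) != 0 by rewrite pnatr_eq0.
  have -> : gp = 2^-1 by apply: (mulfI two0); rewrite divff // mulr_natl mulr2n {2}gd.
  by rewrite rpredM ?rpredV ?rpred_nat.
have L_conj n : lucasL n gp dp ^+ m = lucasL n ap bp ^+ m.
  have Pm u w : u + w = 1 -> u != w ->
      lucasL n u w ^+ m = (map_poly ratr (lucas_poly n ^+ m)).[u * w].
    by move=> uw1 uw; rewrite rmorphXn horner_exp lucas_polyE.
  by rewrite !Pm // Dy; apply: horner_rat_conjugate y_conj; rewrite -Pm.
have t_nu : not_root_of_unity (gp / dp).
  move=> k k0; rewrite -lucasL_eq0 //; apply: contra (r_nu k k0) => /eqP Lk0.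
  rewrite -lucasL_eq0 //; have := L_conj k; rewrite Lk0 expr0n gtn_eqF //.
  by move=> /esym/eqP; rewrite expf_eq0 m0.
by rewrite -Dy; apply: lucasL_expn_eq_mul L_conj.
Qed.

Theorem lemma6 (alpha beta : algC) (m : nat) :
  alpha != 0 -> beta != 0 -> alpha \in Aint -> beta \in Aint ->
  ~ (exists k : nat, (0 < k)%N /\ (alpha / beta) ^+ k = 1) ->
  (2 <= m)%N ->
  (forall n : nat, lucasL n alpha beta ^+ m \in Num.int) ->
  exists gamma alpha' beta' : algC,
    [/\ gamma \in Aint, gamma ^+ m \in Crat,
        alpha = gamma * alpha', beta = gamma * beta' &
        (forall n : nat, lucasL n alpha' beta' \in Crat) \/
        (~~ odd m /\
         exists (r s : int) (u v : algC),
           [/\ coprimez r s, u ^+ 2 = r%:~R, v ^+ 2 = s%:~R,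
           alpha' = u + v /\ beta' = u - v &
           forall n : nat, lucasL n alpha' beta' ^+ 2 \in Crat])].
Proof.
move=> a0 b0 aA bA r_root m2 L_int; have m0 := ltnW m2.
have r_nu : not_root_of_unity (alpha / beta).
  by move=> k k0; apply/eqP => rk; apply: r_root; exists k.
have ab : alpha != beta by apply: contra_neq (r_nu 1%N isT) => ->; rewrite expr1 divff.
set g := alpha + beta; have L2 : lucasL 2 alpha beta = g := lucasL2 ab.
have g0 : g != 0.
  apply: contra_neq (r_nu 2%N isT) => /(canRL (addKr alpha)); rewrite addr0 => ->.
  by rewrite invrN mulrN divff // sqrrN expr1n.
have gm_rat : g ^+ m \in Crat by rewrite -L2 Cint_Crat.
exists g, (alpha / g), (beta / g); split; rewrite ?rpredD ?[g * _]mulrC ?divfK //.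
left; set ap := alpha / g; set bp := beta / g.
have s1 : ap + bp = 1 by rewrite -mulrDl divff.
have ap0 : ap != 0 by rewrite mulf_neq0 ?invr_eq0.
have bp0 : bp != 0 by rewrite mulf_neq0 ?invr_eq0.
have ap_bp : ap / bp = alpha / beta by rewrite /ap /bp; field; rewrite b0 g0.
have L'_rat n : lucasL n ap bp ^+ m \in Crat.
  rewrite lucasL_divr //; move: (Cint_Crat (L_int n)) => {L_int}.
  move: (lucasL n alpha beta) => L LQ.
  rewrite !exprMn exprVn -exprM mulnC exprM.
  by apply: rpred_div; [apply: rpredM | apply: rpredX].
have x_rat : ap * bp \in Crat.
  apply: Crat_of_conjugates => y; apply: irrational_conjugate_sum1_mul L'_rat => //.
  by rewrite ap_bp.
have apbp : ap != bp by apply: contra_neq (r_nu 1%N isT) => E; rewrite -ap_bp E expr1 divff.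
move=> n; rewrite -lucas_polyE //; have /CratP[q ->] := x_rat.
by rewrite horner_map Crat_rat.
Qed.
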